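(* Let $X$ be a complete CAT(0) space, $T_n:X\to X$ for every $n\in\mathbb{N}$, and $(\gamma_n)$ a sequence of positive reals with $\sum_{n=0}^\infty\gamma_n^2=\infty$. Assume that $(T_n)$ is jointly $(P_2)$ with respect to $(\gamma_n)$ (in particular, this holds if $(T_n)$ is jointly firmly nonexpansive with respect to $(\gamma_n)$) and that $F:=\bigcap_{n\in\mathbb{N}}Fix(T_n)\neq\emptyset$. Let $x\in X$, $x_0:=x$, $x_{n+1}:=T_nx_n$ for all $n$. Then $(x_n)$ $\Delta$-converges to a point of $F$.
   Context: A geodesic space $(X,d)$ is CAT(0) if for all $z\in X$, all geodesics $\gamma:[a,b]\to X$ and all $t\in[0,1]$, $d^2(z,\gamma((1-t)a+tb))\le(1-t)d^2(z,\gamma(a))+td^2(z,\gamma(b))-t(1-t)d^2(\gamma(a),\gamma(b))$. CAT(0) spaces are uniquely geodesic; $(1-t)x+ty$ denotes the point at distance $t\,d(x,y)$ from $x$ on the geodesic from $x$ to $y$. $(T_n)$ is jointly firmly nonexpansive w.r.t. $(\gamma_n)$ if for all $n,m$, $x,y\in X$, $\alpha,\beta\in[0,1]$ with $(1-\alpha)\gamma_n=(1-\beta)\gamma_m$: $d(T_nx,T_my)\le d((1-\alpha)x+\alpha T_nx,(1-\beta)y+\beta T_my)$. $(T_n)$ is jointly $(P_2)$ w.r.t. $(\gamma_n)$ if for all $n,m$ and $x,y\in X$: $\frac1{\gamma_m}\big(d^2(T_nx,T_my)+d^2(y,T_my)-d^2(y,T_nx)\big)\le\frac1{\gamma_n}\big(d^2(x,T_my)-d^2(x,T_nx)-d^2(T_nx,T_my)\big)$.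 $Fix(T)$ is the fixed point set. For a bounded sequence $(u_n)$, an asymptotic center is a minimizer over $X$ of $y\mapsto\limsup_n d(y,u_n)$; a bounded sequence $\Delta$-converges to $x$ if every subsequence has $x$ as its unique asymptotic center. *)

From Stdlib Require Import Reals.
From Coquelicot Require Import Coquelicot.
Open Scope R_scope.

Section CAT0.
Context {X : Type} (d : X -> X -> R).

Definition is_metric : Prop :=
  (forall x y, 0 <= d x y) /\
  (forall x y, d x y = 0 <-> x = y) /\
  (forall x y, d x y = d y x) /\
  (forall x y z, d x z <= d x y + d y z).

Definition is_geodesic (g : R -> X) (a b : R) : Prop :=
  a <= b /\
  forall s t, a <= s <= b -> a <= t <= b -> d (g s) (g t) = Rabs (s - t).

Definition geodesic_space : Prop :=
  forall x y, exists g : R -> X,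
    is_geodesic g 0 (d x y) /\ g 0 = x /\ g (d x y) = y.

Definition CAT0_ineq : Prop :=
  forall (z : X) (g : R -> X) (a b : R), is_geodesic g a b ->
  forall t, 0 <= t <= 1 ->
    (d z (g ((1 - t) * a + t * b)))^2 <=
      (1 - t) * (d z (g a))^2 + t * (d z (g b))^2
      - t * (1 - t) * (d (g a) (g b))^2.

Definition cauchy_seq (u : nat -> X) : Prop :=
  forall eps, 0 < eps -> exists N, forall m n, (N <= m)%nat -> (N <= n)%nat ->
    d (u m) (u n) < eps.

Definition converges_to (u : nat -> X) (l : X) : Prop :=
  forall eps, 0 < eps -> exists N, forall n, (N <= n)%nat -> d (u n) l < eps.

Definition complete : Prop :=
  forall u, cauchy_seq u -> exists l, converges_to u l.

Definition complete_CAT0 : Prop :=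
  is_metric /\ geodesic_space /\ CAT0_ineq /\ complete.

Definition bounded_seq (u : nat -> X) : Prop :=
  exists (c : X) (M : R), forall n, d c (u n) <= M.

Definition asymptotic_radius_at (u : nat -> X) (y : X) : Rbar :=
  LimSup_seq (fun n => d y (u n)).

Definition is_asymptotic_center (u : nat -> X) (x : X) : Prop :=
  forall y, Rbar_le (asymptotic_radius_at u x) (asymptotic_radius_at u y).

Definition unique_asymptotic_center (u : nat -> X) (x : X) : Prop :=
  is_asymptotic_center u x /\ forall y, is_asymptotic_center u y -> y = x.

Definition Delta_converges (u : nat -> X) (x : X) : Prop :=
  bounded_seq u /\
  forall phi : nat -> nat, (forall n, (phi n < phi (S n))%nat) ->
    unique_asymptotic_center (fun n => u (phi n)) x.

Definition jointly_P2 (T : nat -> X -> X) (gamma : nat -> R) : Prop :=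
  forall n m x y,
    / gamma m * ((d (T n x) (T m y))^2 + (d y (T m y))^2 - (d y (T n x))^2) <=
    / gamma n * ((d x (T m y))^2 - (d x (T n x))^2 - (d (T n x) (T m y))^2).

End CAT0.

Fixpoint orbit {X : Type} (T : nat -> X -> X) (x : X) (n : nat) : X :=
  match n with
  | O => x
  | S k => T k (orbit T x k)
  end.

From Stdlib Require Import Reals Lra Lia Psatz Classical ClassicalEpsilon.
From Coquelicot Require Import Coquelicot.
Open Scope R_scope.

(* Testing (P_2) against a common fixed point q gives Fejér monotonicity,
   d(x_{n+1},q)^2 + d(x_n,x_{n+1})^2 <= d(x_n,q)^2, hence sum_n d(x_n,x_{n+1})^2 < oo.
   Testing it against (x_{n+1}, T_{n+1} x_{n+1}) shows that d(x_n,x_{n+1})/gamma_n is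
   nonincreasing, so it tends to 0 because sum_n gamma_n^2 = oo.  Testing it against an
   arbitrary (v, T_m v) then yields, up to a vanishing error,
   d(T_m v, x_n)^2 <= d(v, x_n)^2 - d(v, T_m v)^2, so the asymptotic center of every
   subsequence is a common fixed point.  Since d(q, x_n) is nonincreasing for every common
   fixed point q, all subsequences have the same asymptotic radius at such points, hence they
   share the asymptotic center of the whole orbit, which is unique in a complete CAT(0) space. *)

Lemma Rle_plus_scaled_epsilon (a b k : R) :
  0 <= k -> (forall e, 0 < e -> a <= b + k * e) -> a <= b.
Proof.
  intros Hk H. apply Rle_plus_epsilon. intros e He.
  assert (He' : 0 < e / (k + 1)) by (apply Rdiv_lt_0_compat; lra).
  specialize (H _ He').
  assert (Hsplit : k * (e / (k + 1)) = e - e / (k + 1)) by (field; lra).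
  lra.
Qed.

Lemma is_LimSup_seq_frequently (u : nat -> R) (l e : R) :
  is_LimSup_seq u l -> 0 < e -> forall N, exists n, (N <= n)%nat /\ l - e < u n.
Proof. intros H He. exact (proj1 (H (mkposreal e He))). Qed.

Lemma is_LimSup_seq_eventually (u : nat -> R) (l e : R) :
  is_LimSup_seq u l -> 0 < e -> exists N, forall n, (N <= n)%nat -> u n < l + e.
Proof. intros H He. exact (proj2 (H (mkposreal e He))). Qed.

Lemma is_LimSup_seq_nonneg (u : nat -> R) (l : R) :
  (forall n, 0 <= u n) -> is_LimSup_seq u l -> 0 <= l.
Proof.
  intros Hu H. apply Rle_plus_epsilon. intros e He.
  destruct (is_LimSup_seq_eventually u l e H He) as [N HN].
  specialize (HN N (le_n N)). specialize (Hu N). lra.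
Qed.

Lemma is_LimSup_seq_le_affine (a b c : nat -> R) (la lb lc alpha beta k : R) :
  is_LimSup_seq a la -> is_LimSup_seq b lb -> is_LimSup_seq c lc ->
  0 <= alpha -> 0 <= beta ->
  (forall e, 0 < e -> exists N, forall n, (N <= n)%nat ->
     a n <= alpha * b n + beta * c n + k + e) ->
  la <= alpha * lb + beta * lc + k.
Proof.
  intros Ha Hb Hc Halpha Hbeta H.
  apply (Rle_plus_scaled_epsilon _ _ (2 + alpha + beta)); [lra|].
  intros e He.
  destruct (is_LimSup_seq_eventually b lb e Hb He) as [Nb HNb].
  destruct (is_LimSup_seq_eventually c lc e Hc He) as [Nc HNc].
  destruct (H e He) as [Nh HNh].
  destruct (is_LimSup_seq_frequently a la e Ha He (Nb + Nc + Nh)) as [n [Hn Han]].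
  specialize (HNb n ltac:(lia)). specialize (HNc n ltac:(lia)). specialize (HNh n ltac:(lia)).
  assert (alpha * b n <= alpha * (lb + e)) by (apply Rmult_le_compat_l; lra).
  assert (beta * c n <= beta * (lc + e)) by (apply Rmult_le_compat_l; lra).
  nra.
Qed.

Lemma is_LimSup_seq_sqr (u : nat -> R) (l : R) :
  (forall n, 0 <= u n) -> is_LimSup_seq u l -> is_LimSup_seq (fun n => u n ^ 2) (l ^ 2).
Proof.
  intros Hu H. pose proof (is_LimSup_seq_nonneg u l Hu H) as Hl.
  intros [e He]; simpl.
  (* [(l +- delta)^2] is within [delta * (2 l + 1) <= e] of [l^2] *)
  set (delta := Rmin 1 (e / (2 * l + 1))).
  assert (Hdelta : 0 < delta) by (apply Rmin_glb_lt; [lra | apply Rdiv_lt_0_compat; lra]).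
  assert (Hdelta1 : delta <= 1) by apply Rmin_l.
  assert (Hdelta_e : delta * (2 * l + 1) <= e).
  { pose proof (Rmin_r 1 (e / (2 * l + 1))) as Hr. fold delta in Hr.
    apply (Rmult_le_compat_r (2 * l + 1)) in Hr; [|lra].
    unfold Rdiv in Hr. rewrite Rmult_assoc, Rinv_l in Hr; lra. }
  split.
  - intros N. destruct (is_LimSup_seq_frequently u l delta H Hdelta N) as [n [Hn Hlt]].
    exists n. split; [exact Hn|]. specialize (Hu n).
    destruct (Rle_or_lt (l - delta) 0); [nra|].
    assert ((l - delta) * (l - delta) <= u n * u n) by (apply Rmult_le_compat; lra).
    nra.
  - destruct (is_LimSup_seq_eventually u l delta H Hdelta) as [N HN].
    exists N. intros n Hn. specialize (HN n Hn). specialize (Hu n).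
    assert (u n * u n <= (l + delta) * (l + delta)) by (apply Rmult_le_compat; lra).
    nra.
Qed.

Lemma is_LimSup_seq_decreasing_subseq (u : nat -> R) (l : R) (phi : nat -> nat) :
  Un_decreasing u -> is_LimSup_seq u l -> (forall k, (k <= phi k)%nat) ->
  is_LimSup_seq (fun k => u (phi k)) l.
Proof.
  intros Hdec H Hphi.
  assert (Hlow : forall n, l <= u n).
  { intros n. apply Rle_plus_epsilon. intros e He.
    destruct (is_LimSup_seq_frequently u l e H He n) as [n' [Hn' Hlt]].
    pose proof (decreasing_prop u n n' Hdec Hn'). lra. }
  intros [e He]; simpl. split.
  - intros N. exists N. split; [lia|]. specialize (Hlow (phi N)). lra.
  - destruct (is_LimSup_seq_eventually u l e H He) as [N HN].
    exists N. intros k Hk. apply HN. specialize (Hphi k). lia.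
Qed.

Lemma decreasing_ratio_eventually_le (a g : nat -> R) (B : R) :
  (forall n, 0 < g n) -> cv_infty (fun N => sum_f_R0 (fun n => g n ^ 2) N) ->
  (forall N, sum_f_R0 (fun n => a n ^ 2) N <= B) ->
  Un_decreasing (fun n => a n / g n) ->
  forall e, 0 < e -> exists N, forall n, (N <= n)%nat -> a n / g n <= e.
Proof.
  intros Hg Hdiv Hbound Hdec e He.
  destruct (classic (exists N, a N / g N <= e)) as [[N HN] | Hnot].
  - exists N. intros n Hn. pose proof (decreasing_prop _ N n Hdec Hn). lra.
  - exfalso.
    assert (Hsq : forall n, (e * g n) ^ 2 <= a n ^ 2).
    { intros n. assert (Hlt : e < a n / g n) by (apply Rnot_le_lt; eauto).
      specialize (Hg n).
      assert (e * g n < a n).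
      { apply (Rmult_lt_compat_r (g n)) in Hlt; [|exact Hg].
        unfold Rdiv in Hlt. rewrite Rmult_assoc, Rinv_l in Hlt; lra. }
      assert (0 < e * g n) by (apply Rmult_lt_0_compat; lra).
      nra. }
    assert (Hsum : forall N,
      e ^ 2 * sum_f_R0 (fun n => g n ^ 2) N <= sum_f_R0 (fun n => a n ^ 2) N).
    { induction N as [|N IH]; cbn [sum_f_R0].
      - specialize (Hsq 0%nat). nra.
      - specialize (Hsq (S N)). nra. }
    assert (He2 : 0 < e ^ 2) by nra.
    destruct (Hdiv (B / e ^ 2)) as [N HN]. specialize (HN N (le_n N)).
    specialize (Hsum N). specialize (Hbound N).
    apply (Rmult_lt_compat_l (e ^ 2)) in HN; [|exact He2].
    replace (e ^ 2 * (B / e ^ 2)) with B in HN by (field; lra).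
    lra.
Qed.

Section MetricSpace.
Context {X : Type} (d : X -> X -> R) (Hm : is_metric d).

Lemma dist_nonneg x y : 0 <= d x y.
Proof. exact (proj1 Hm x y). Qed.

Lemma dist_eq0 x y : d x y = 0 -> x = y.
Proof. apply (proj1 (proj2 Hm)). Qed.

Lemma dist_refl x : d x x = 0.
Proof. apply (proj1 (proj2 Hm)). reflexivity. Qed.

Lemma dist_sym x y : d x y = d y x.
Proof. exact (proj1 (proj2 (proj2 Hm)) x y). Qed.

Lemma dist_triangle x y z : d x z <= d x y + d y z.
Proof. exact (proj2 (proj2 (proj2 Hm)) x y z). Qed.

(* [real] sends the infinite limsups to 0; for bounded [u] the radius is finite by
   [is_LimSup_rad]. *)
Definition rad (u : nat -> X) (y : X) : R := real (asymptotic_radius_at d u y).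

Section AsymptoticRadius.
Variable u : nat -> X.
Hypothesis Hu : bounded_seq d u.

Lemma is_LimSup_rad y : is_LimSup_seq (fun n => d y (u n)) (rad u y).
Proof.
  destruct Hu as [c [M HM]].
  unfold rad, asymptotic_radius_at.
  destruct (ex_LimSup_seq (fun n => d y (u n))) as [l Hl].
  rewrite (is_LimSup_seq_unique _ _ Hl).
  assert (Hbound : forall n, d y (u n) <= d y c + M).
  { intros n. pose proof (dist_triangle y c (u n)). specialize (HM n). lra. }
  destruct l as [l | |]; simpl.
  - exact Hl.
  - destruct (Hl (d y c + M + 1) 0%nat) as [n [_ Hn]]. specialize (Hbound n). lra.
  - destruct (Hl 0) as [N HN]. specialize (HN N (le_n N)).
    pose proof (dist_nonneg y (u N)). lra.
Qed.

Lemma is_asymptotic_center_rad y :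
  is_asymptotic_center d u y <-> forall y', rad u y <= rad u y'.
Proof.
  assert (Hfin : forall y, asymptotic_radius_at d u y = Finite (rad u y))
    by (intros; apply is_LimSup_seq_unique, is_LimSup_rad).
  unfold is_asymptotic_center.
  split; intros H y'; specialize (H y'); rewrite !Hfin in *; exact H.
Qed.

Lemma rad_nonneg y : 0 <= rad u y.
Proof. apply (is_LimSup_seq_nonneg _ _ (fun n => dist_nonneg y (u n)) (is_LimSup_rad y)). Qed.

Lemma is_LimSup_rad_sqr y : is_LimSup_seq (fun n => d y (u n) ^ 2) (rad u y ^ 2).
Proof. apply (is_LimSup_seq_sqr _ _ (fun n => dist_nonneg y (u n)) (is_LimSup_rad y)). Qed.

Lemma rad_le_dist y y' : rad u y <= rad u y' + d y y'.
Proof.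
  assert (H := is_LimSup_seq_le_affine _ _ _ _ _ _ 1 0 (d y y')
    (is_LimSup_rad y) (is_LimSup_rad y') (is_LimSup_rad y') ltac:(lra) ltac:(lra)).
  enough (rad u y <= 1 * rad u y' + 0 * rad u y' + d y y') by lra.
  apply H. intros e He. exists 0%nat. intros n _.
  pose proof (dist_triangle y y' (u n)). lra.
Qed.

Lemma rad_midpoint y z m :
  (forall w, d w m ^ 2 <= / 2 * d w y ^ 2 + / 2 * d w z ^ 2 - / 4 * d y z ^ 2) ->
  rad u m ^ 2 <= / 2 * rad u y ^ 2 + / 2 * rad u z ^ 2 - / 4 * d y z ^ 2.
Proof.
  intros Hmid.
  apply (is_LimSup_seq_le_affine _ _ _ _ _ _ _ _ _
    (is_LimSup_rad_sqr m) (is_LimSup_rad_sqr y) (is_LimSup_rad_sqr z)); [lra | lra |].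
  intros e He. exists 0%nat. intros n _.
  specialize (Hmid (u n)). rewrite !(dist_sym (u n)) in Hmid. lra.
Qed.

End AsymptoticRadius.

Section AsymptoticCenter.
Hypothesis Hgeo : geodesic_space d.
Hypothesis Hcat : CAT0_ineq d.
Hypothesis Hcomp : complete d.

Lemma midpoint_exists y z : exists m, forall w,
  d w m ^ 2 <= / 2 * d w y ^ 2 + / 2 * d w z ^ 2 - / 4 * d y z ^ 2.
Proof.
  destruct (Hgeo y z) as [g [Hg [Hg0 Hg1]]].
  exists (g ((1 - / 2) * 0 + / 2 * d y z)). intros w.
  pose proof (Hcat w g 0 (d y z) Hg (/ 2) ltac:(lra)) as H.
  rewrite Hg0, Hg1 in H. lra.
Qed.

Variable u : nat -> X.
Hypothesis Hu : bounded_seq d u.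

Lemma dist_sqr_le_rad (r : R) y z : 0 <= r -> (forall w, r <= rad u w) ->
  d y z ^ 2 <= 2 * rad u y ^ 2 + 2 * rad u z ^ 2 - 4 * r ^ 2.
Proof.
  intros Hr Hlow. destruct (midpoint_exists y z) as [m Hmid].
  pose proof (rad_midpoint u Hu y z m Hmid). specialize (Hlow m).
  assert (r * r <= rad u m * rad u m) by (apply Rmult_le_compat; lra).
  nra.
Qed.

Lemma asymptotic_center_unique p q :
  (forall y, rad u p <= rad u y) -> (forall y, rad u q <= rad u y) -> p = q.
Proof.
  intros Hp Hq. apply dist_eq0.
  pose proof (dist_sqr_le_rad (rad u p) p q (rad_nonneg u Hu p) Hp).
  assert (Heq : rad u q = rad u p) by (specialize (Hp q); specialize (Hq p); lra).
  rewrite Heq in H. pose proof (dist_nonneg p q).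
  apply Rle_antisym; nra.
Qed.

Lemma rad_infimum : exists r, 0 <= r /\ (forall y, r <= rad u y) /\
  forall e, 0 < e -> exists y, rad u y < r + e.
Proof.
  set (E := fun t => exists y, t = - rad u y).
  assert (H0 : is_upper_bound E 0).
  { intros t [y ->]. pose proof (rad_nonneg u Hu y). lra. }
  assert (Hne : exists t, E t).
  { destruct Hu as [c _]. exists (- rad u c), c. reflexivity. }
  destruct (completeness E (ex_intro _ 0 H0) Hne) as [s [Hub Hleast]].
  exists (- s). split; [|split].
  - specialize (Hleast 0 H0). lra.
  - intros y. assert (Hy : E (- rad u y)) by (exists y; reflexivity).
    specialize (Hub _ Hy). lra.
  - intros e He. apply NNPP. intros Hnot.
    assert (Hub' : is_upper_bound E (s - e)).
    { intros t [y ->]. apply Rnot_lt_le. intros Hlt. apply Hnot. exists y. lra. }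
    specialize (Hleast _ Hub'). lra.
Qed.

Lemma rad_near_infimum_close r : 0 <= r -> (forall w, r <= rad u w) ->
  forall eps, 0 < eps -> exists delta, 0 < delta /\ forall y z,
    rad u y < r + delta -> rad u z < r + delta -> d y z < eps.
Proof.
  intros Hr Hlow eps Heps.
  (* by [dist_sqr_le_rad], [d y z ^ 2 <= 4 (r + delta) ^ 2 - 4 r ^ 2 <= (8 r + 4) delta] *)
  set (delta := Rmin 1 (eps ^ 2 / (16 * r + 16))).
  assert (Hdelta : 0 < delta).
  { apply Rmin_glb_lt; [lra|]. apply Rdiv_lt_0_compat; [nra | lra]. }
  assert (Hdelta1 : delta <= 1) by apply Rmin_l.
  assert (Hdelta_eps : delta * (16 * r + 16) <= eps ^ 2).
  { pose proof (Rmin_r 1 (eps ^ 2 / (16 * r + 16))) as H. fold delta in H.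
    apply (Rmult_le_compat_r (16 * r + 16)) in H; [|lra].
    unfold Rdiv in H. rewrite Rmult_assoc, Rinv_l in H; lra. }
  exists delta. split; [exact Hdelta|]. intros y z Hy Hz.
  pose proof (dist_sqr_le_rad r y z Hr Hlow) as Hd.
  pose proof (rad_nonneg u Hu y). pose proof (rad_nonneg u Hu z).
  pose proof (dist_nonneg y z).
  assert (rad u y * rad u y <= (r + delta) * (r + delta)) by (apply Rmult_le_compat; lra).
  assert (rad u z * rad u z <= (r + delta) * (r + delta)) by (apply Rmult_le_compat; lra).
  nra.
Qed.

Lemma asymptotic_center_exists : exists p, forall y, rad u p <= rad u y.
Proof.
  destruct rad_infimum as [r [Hr [Hlow Happrox]]].
  assert (Hchoice : forall k : nat, {y | rad u y < r + / INR (S k)}).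
  { intros k. apply constructive_indefinite_description, Happrox.
    apply Rinv_0_lt_compat, lt_0_INR. lia. }
  set (ys := fun k => proj1_sig (Hchoice k)).
  assert (Htail : forall e, 0 < e -> exists N, forall k, (N <= k)%nat -> rad u (ys k) < r + e).
  { intros e He. destruct (archimed_cor1 e He) as [N [HNe HN]].
    exists N. intros k Hk. pose proof (proj2_sig (Hchoice k)) as Hys.
    assert (/ INR (S k) < / INR N).
    { apply Rinv_lt_contravar; [apply Rmult_lt_0_compat |]; try apply lt_0_INR;
        try apply lt_INR; lia. }
    unfold ys. lra. }
  assert (Hcauchy : cauchy_seq d ys).
  { intros eps Heps.
    destruct (rad_near_infimum_close r Hr Hlow eps Heps) as [delta [Hdelta Hclose]].
    destruct (Htail delta Hdelta) as [N HN].
    exists N. intros j k Hj Hk. apply Hclose; auto. }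
  destruct (Hcomp ys Hcauchy) as [p Hp].
  exists p. intros y. apply Rle_trans with r; [|apply Hlow].
  apply Rle_plus_epsilon. intros e He.
  destruct (Hp (e / 2) ltac:(lra)) as [N1 HN1].
  destruct (Htail (e / 2) ltac:(lra)) as [N2 HN2].
  specialize (HN1 (N1 + N2)%nat ltac:(lia)). specialize (HN2 (N1 + N2)%nat ltac:(lia)).
  pose proof (rad_le_dist u Hu p (ys (N1 + N2)%nat)) as Hlip.
  rewrite (dist_sym p) in Hlip. lra.
Qed.

End AsymptoticCenter.
End MetricSpace.

Lemma strictly_increasing_ge_id (phi : nat -> nat) :
  (forall n, (phi n < phi (S n))%nat) -> forall k, (k <= phi k)%nat.
Proof. intros Hphi k. induction k as [|k IH]; [lia|]. specialize (Hphi k). lia. Qed.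

Section Orbit.
Context {X : Type} (d : X -> X -> R) (Hm : is_metric d).
Variables (T : nat -> X -> X) (gamma : nat -> R).
Hypothesis Hgamma : forall n, 0 < gamma n.
Hypothesis HP2 : jointly_P2 d T gamma.
Variable x : X.

Local Notation xs := (orbit T x).
Local Notation step n := (d (xs n) (xs (S n))).

Lemma orbit_fejer q : (forall n, T n q = q) -> forall n,
  d (xs (S n)) q ^ 2 + step n ^ 2 <= d (xs n) q ^ 2.
Proof.
  intros Hq n. pose proof (HP2 n 0%nat (xs n) q) as H.
  rewrite Hq, (dist_refl d Hm), (dist_sym d Hm q) in H.
  change (T n (xs n)) with (xs (S n)) in H.
  pose proof (Rinv_0_lt_compat _ (Hgamma n)).
  assert (0 <= / gamma n * (d (xs n) q ^ 2 - step n ^ 2 - d (xs (S n)) q ^ 2)) by lra.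
  nra.
Qed.

Lemma orbit_dist_fixed_decreasing q : (forall n, T n q = q) ->
  Un_decreasing (fun n => d q (xs n)).
Proof.
  intros Hq n. pose proof (orbit_fejer q Hq n). rewrite !(dist_sym d Hm q).
  pose proof (dist_nonneg d Hm (xs (S n)) q). pose proof (dist_nonneg d Hm (xs n) q).
  nra.
Qed.

Lemma orbit_subseq_bounded q phi : (forall n, T n q = q) ->
  bounded_seq d (fun k => xs (phi k)).
Proof.
  intros Hq. exists q, (d q x). intros k.
  apply (decreasing_prop (fun n => d q (xs n)) 0); [|lia].
  exact (orbit_dist_fixed_decreasing q Hq).
Qed.

Lemma orbit_step_sum_bounded q : (forall n, T n q = q) ->
  forall N, sum_f_R0 (fun n => step n ^ 2) N <= d x q ^ 2.
Proof.
  intros Hq.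
  assert (H : forall N, sum_f_R0 (fun n => step n ^ 2) N + d (xs (S N)) q ^ 2 <= d x q ^ 2).
  { induction N as [|N IH]; cbn [sum_f_R0].
    - pose proof (orbit_fejer q Hq 0). simpl orbit in *. lra.
    - pose proof (orbit_fejer q Hq (S N)). lra. }
  intros N. specialize (H N). pose proof (pow2_ge_0 (d (xs (S N)) q)). lra.
Qed.

Lemma orbit_step_ratio_decreasing : Un_decreasing (fun n => step n / gamma n).
Proof.
  intros n. pose proof (HP2 n (S n) (xs n) (xs (S n))) as H.
  change (T n (xs n)) with (xs (S n)) in H.
  change (T (S n) (xs (S n))) with (xs (S (S n))) in H.
  rewrite (dist_refl d Hm) in H.
  pose proof (dist_triangle d Hm (xs n) (xs (S n)) (xs (S (S n)))) as Htri.
  pose proof (dist_nonneg d Hm (xs n) (xs (S (S n)))).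
  pose proof (dist_nonneg d Hm (xs n) (xs (S n))).
  pose proof (dist_nonneg d Hm (xs (S n)) (xs (S (S n)))).
  pose proof (Rinv_0_lt_compat _ (Hgamma n)). pose proof (Rinv_0_lt_compat _ (Hgamma (S n))).
  (* (P_2) bounds [2 step (n+1)^2 / gamma (n+1)] by [2 step n * step (n+1) / gamma n] *)
  assert (Hprod : / gamma (S n) * step (S n) ^ 2 <= / gamma n * (step n * step (S n))).
  { set (D := d (xs n) (xs (S (S n)))) in *.
    assert (D ^ 2 <= (step n + step (S n)) ^ 2) by nra.
    nra. }
  unfold Rdiv.
  destruct (Req_dec (step (S n)) 0) as [Hz | Hnz].
  - rewrite Hz. nra.
  - nra.
Qed.

Hypothesis Hdiv : cv_infty (fun N => sum_f_R0 (fun n => gamma n ^ 2) N).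

Lemma orbit_step_ratio_eventually_le q : (forall n, T n q = q) ->
  forall e, 0 < e -> exists N, forall n, (N <= n)%nat -> step n / gamma n <= e.
Proof.
  intros Hq.
  exact (decreasing_ratio_eventually_le _ _ _ Hgamma Hdiv (orbit_step_sum_bounded q Hq)
    orbit_step_ratio_decreasing).
Qed.

Lemma orbit_P2_test q v m n : (forall k, T k q = q) ->
  d (xs (S n)) (T m v) ^ 2 <= d v (xs (S n)) ^ 2 - d v (T m v) ^ 2
    + gamma m * (step n / gamma n) * (2 * (d (T m v) q + d q x)).
Proof.
  intros Hq. pose proof (HP2 n m (xs n) v) as H.
  change (T n (xs n)) with (xs (S n)) in H.
  set (z := T m v) in *.
  assert (Hbound : forall k, d (xs k) z <= d q x + d z q).
  { intros k. pose proof (dist_triangle d Hm (xs k) q z) as Htri.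
    rewrite (dist_sym d Hm (xs k) q), (dist_sym d Hm q z) in Htri.
    pose proof (decreasing_prop _ 0 k (orbit_dist_fixed_decreasing q Hq) ltac:(lia)) as Hdec.
    simpl in Hdec. lra. }
  pose proof (Hbound n). pose proof (Hbound (S n)).
  pose proof (dist_nonneg d Hm (xs n) z). pose proof (dist_nonneg d Hm (xs (S n)) z).
  pose proof (dist_nonneg d Hm (xs n) (xs (S n))).
  pose proof (dist_triangle d Hm (xs n) (xs (S n)) z).
  set (P := d (xs n) z) in *. set (Q := d (xs (S n)) z) in *.
  set (K := 2 * (d z q + d q x)).
  assert (Hrhs : P ^ 2 - step n ^ 2 - Q ^ 2 <= step n * K).
  { assert (0 <= (step n + Q - P) * (step n + Q + P)) by (apply Rmult_le_pos; lra).
    assert (0 <= step n * (d q x + d z q - Q)) by (apply Rmult_le_pos; lra).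
    unfold K. nra. }
  pose proof (Rinv_0_lt_compat _ (Hgamma n)).
  assert (Hrhs' : / gamma n * (P ^ 2 - step n ^ 2 - Q ^ 2) <= step n / gamma n * K).
  { apply Rle_trans with (/ gamma n * (step n * K)); [apply Rmult_le_compat_l; lra|].
    unfold Rdiv. lra. }
  set (L := Q ^ 2 + d v z ^ 2 - d v (xs (S n)) ^ 2) in *.
  pose proof (Hgamma m).
  assert (HL : gamma m * (/ gamma m * L) <= gamma m * (step n / gamma n * K))
    by (apply Rmult_le_compat_l; lra).
  replace (gamma m * (/ gamma m * L)) with L in HL by (field; lra).
  unfold L in HL. lra.
Qed.

Lemma orbit_P2_test_eventually q v m : (forall k, T k q = q) ->
  forall e, 0 < e -> exists N, forall n, (N <= n)%nat ->
    d (xs (S n)) (T m v) ^ 2 <= d v (xs (S n)) ^ 2 - d v (T m v) ^ 2 + e.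
Proof.
  intros Hq e He.
  set (C := gamma m * (2 * (d (T m v) q + d q x))).
  assert (HC : 0 <= C).
  { pose proof (dist_nonneg d Hm (T m v) q). pose proof (dist_nonneg d Hm q x).
    pose proof (Hgamma m). unfold C. nra. }
  assert (He' : 0 < e / (C + 1)) by (apply Rdiv_lt_0_compat; lra).
  destruct (orbit_step_ratio_eventually_le q Hq _ He') as [N HN].
  exists N. intros n Hn. specialize (HN n Hn).
  pose proof (orbit_P2_test q v m n Hq) as Htest.
  replace (gamma m * (step n / gamma n) * (2 * (d (T m v) q + d q x)))
    with (C * (step n / gamma n)) in Htest by (unfold C; ring).
  assert (Hratio : 0 <= step n / gamma n).
  { apply Rdiv_le_0_compat; [apply (dist_nonneg d Hm) | exact (Hgamma n)]. }
  assert (Herr : C * (step n / gamma n) <= C * (e / (C + 1)))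
    by (apply Rmult_le_compat_l; lra).
  replace (C * (e / (C + 1))) with (e - e / (C + 1)) in Herr by (field; lra).
  lra.
Qed.

Lemma subseq_asymptotic_center_fixed q phi v : (forall n, T n q = q) ->
  (forall k, (k <= phi k)%nat) ->
  (forall y, rad d (fun k => xs (phi k)) v <= rad d (fun k => xs (phi k)) y) ->
  forall m, T m v = v.
Proof.
  intros Hq Hphi Hv m.
  (* rad (T_m v)^2 <= rad v^2 - d(v, T_m v)^2, while v minimises rad *)
  set (u := fun k => xs (phi k)) in *.
  assert (Hu : bounded_seq d u) by exact (orbit_subseq_bounded q phi Hq).
  assert (Hev : forall e, 0 < e -> exists N, forall k, (N <= k)%nat ->
     d (T m v) (u k) ^ 2 <= 1 * d v (u k) ^ 2 + 0 * d v (u k) ^ 2 + - d v (T m v) ^ 2 + e).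
  { intros e He. destruct (orbit_P2_test_eventually q v m Hq e He) as [N HN].
    exists (S N). intros k Hk. unfold u.
    specialize (Hphi k). destruct (phi k) as [|n]; [lia|].
    specialize (HN n ltac:(lia)). rewrite (dist_sym d Hm (T m v)). lra. }
  pose proof (is_LimSup_seq_le_affine _ _ _ _ _ _ 1 0 (- d v (T m v) ^ 2)
    (is_LimSup_rad_sqr d Hm u Hu (T m v)) (is_LimSup_rad_sqr d Hm u Hu v)
    (is_LimSup_rad_sqr d Hm u Hu v) ltac:(lra) ltac:(lra) Hev) as Hrad.
  specialize (Hv (T m v)).
  pose proof (rad_nonneg d Hm u Hu v).
  assert (rad d u v * rad d u v <= rad d u (T m v) * rad d u (T m v))
    by (apply Rmult_le_compat; lra).
  pose proof (dist_nonneg d Hm v (T m v)).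
  apply eq_sym, (dist_eq0 d Hm). apply Rle_antisym; nra.
Qed.

Lemma rad_subseq_fixed q phi : (forall n, T n q = q) -> (forall k, (k <= phi k)%nat) ->
  rad d (fun k => xs (phi k)) q = rad d xs q.
Proof.
  intros Hq Hphi. unfold rad, asymptotic_radius_at.
  pose proof (is_LimSup_rad d Hm xs (orbit_subseq_bounded q (fun k => k) Hq) q) as Hlim.
  rewrite (is_LimSup_seq_unique _ _ Hlim).
  rewrite (is_LimSup_seq_unique _ _ (is_LimSup_seq_decreasing_subseq _ _ phi
    (orbit_dist_fixed_decreasing q Hq) Hlim Hphi)).
  reflexivity.
Qed.

Hypothesis Hgeo : geodesic_space d.
Hypothesis Hcat : CAT0_ineq d.
Hypothesis Hcomp : complete d.

Lemma subseq_asymptotic_center_iff q phi y : (forall n, T n q = q) ->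
  (forall k, (k <= phi k)%nat) ->
  (forall y', rad d (fun k => xs (phi k)) y <= rad d (fun k => xs (phi k)) y') <->
  (forall y', rad d xs y <= rad d xs y').
Proof.
  intros Hq Hphi.
  assert (Hid : forall k, (k <= k)%nat) by (intros; lia).
  destruct (asymptotic_center_exists d Hm Hgeo Hcat Hcomp xs
    (orbit_subseq_bounded q (fun k => k) Hq)) as [p Hp].
  pose proof (subseq_asymptotic_center_fixed q (fun k => k) p Hq Hid Hp) as HpF.
  destruct (asymptotic_center_exists d Hm Hgeo Hcat Hcomp _
    (orbit_subseq_bounded q phi Hq)) as [v Hv].
  pose proof (subseq_asymptotic_center_fixed q phi v Hq Hphi Hv) as HvF.
  split; intros Hy y'.
  - pose proof (subseq_asymptotic_center_fixed q phi y Hq Hphi Hy) as HyF.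
    specialize (Hy p). specialize (Hp y').
    rewrite (rad_subseq_fixed y phi HyF Hphi), (rad_subseq_fixed p phi HpF Hphi) in Hy.
    lra.
  - pose proof (subseq_asymptotic_center_fixed q (fun k => k) y Hq Hid Hy) as HyF.
    specialize (Hy v). specialize (Hv y').
    rewrite <- (rad_subseq_fixed y phi HyF Hphi), <- (rad_subseq_fixed v phi HvF Hphi) in Hy.
    lra.
Qed.

End Orbit.

Theorem theorem3p13 (X : Type) (d : X -> X -> R) (T : nat -> X -> X)
  (gamma : nat -> R) :
  complete_CAT0 d ->
  (forall n, 0 < gamma n) ->
  cv_infty (fun N => sum_f_R0 (fun n => (gamma n)^2) N) ->
  jointly_P2 d T gamma ->
  (exists p : X, forall n, T n p = p) ->
  forall x : X, exists p : X, (forall n, T n p = p) /\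
    Delta_converges d (orbit T x) p.
Proof.
  intros [Hm [Hgeo [Hcat Hcomp]]] Hgamma Hdiv HP2 [q Hq] x.
  pose proof (fun phi => orbit_subseq_bounded d Hm T gamma Hgamma HP2 x q phi Hq) as Hbounded.
  pose proof (subseq_asymptotic_center_iff d Hm T gamma Hgamma HP2 x Hdiv Hgeo Hcat Hcomp q)
    as Hcenter_iff.
  destruct (asymptotic_center_exists d Hm Hgeo Hcat Hcomp _ (Hbounded (fun k => k)))
    as [p Hp].
  exists p. split.
  - exact (subseq_asymptotic_center_fixed d Hm T gamma Hgamma HP2 x Hdiv q (fun k => k) p Hq
      (fun k => le_n k) Hp).
  - split; [exact (Hbounded (fun k => k)) |].
    intros phi Hphi_incr.
    pose proof (strictly_increasing_ge_id phi Hphi_incr) as Hphi.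
    split.
    + apply (is_asymptotic_center_rad d Hm _ (Hbounded phi)).
      apply (Hcenter_iff phi p Hq Hphi). exact Hp.
    + intros y Hy.
      apply (asymptotic_center_unique d Hm Hgeo Hcat _ (Hbounded (fun k => k))); [|exact Hp].
      apply (Hcenter_iff phi y Hq Hphi).
      apply (is_asymptotic_center_rad d Hm _ (Hbounded phi)). exact Hy.
Qed.
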